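(* Let $w\in\mathbb{R}^N_{>0}$ and assume $\mu_i\ge1$ for all $i$. Then $$\min_{x\in\mathbb{R}^N}\Big(\sum_{r\in[R]}f_r(x)+\tfrac12\|x\|_{2,w}^2\Big)=-\min_{y\in\mathcal{B}}\tfrac12\|Ay\|^2_{2,w^{-1}},$$ and the primal minimizer $x^*_w$ satisfies $x^*_w=-w^{-1}\odot Ay$ for every minimizer $y$ of $\|Ay\|^2_{2,w^{-1}}$ over $\mathcal{B}$. Moreover, for every $y\in\mathcal{B}$, $\min_{a\in\mathcal{A}}\|a-y\|^2_{2,I(w^{-1}\odot\mu)}=\|Ay\|^2_{2,w^{-1}}$, so that the problem $\min_{a,y}\|a-y\|^2_{2,I(w^{-1}\odot\mu)}$ subject to $y\in\mathcal{B}$, $a\in\mathcal{A}$ has the same optimal value and optimal $y$'s as $\min_{y\in\mathcal{B}}\|Ay\|^2_{2,w^{-1}}$.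
   Context: $F_r:2^{[N]}\to\mathbb{R}$ ($r\in[R]$) are submodular with $F_r(\emptyset)=0$, base polytopes $\mathcal{B}_r=\{u\in\mathbb{R}^N:\sum_{i\in S}u_i\le F_r(S)\ \forall S,\ \sum_iu_i=F_r([N])\}$ and Lovász extensions $f_r(x)=\max_{u\in\mathcal{B}_r}\langle u,x\rangle$; $\mathcal{B}=\mathcal{B}_1\times\cdots\times\mathcal{B}_R$; $A:(\mathbb{R}^N)^R\to\mathbb{R}^N$, $Ay=\sum_ry_r$. $S_r$ is the set of $i$ with $F_r(S\cup\{i\})\ne F_r(S)$ for some $S\subseteq[N]\setminus\{i\}$; $\mu_i=|\{r:i\in S_r\}|$. $\mathcal{A}=\{a\in(\mathbb{R}^N)^R:Aa=0,\ a_{r,i}=0\text{ whenever }i\notin S_r\}$. Powers ($w^{-1}$) and products ($\odot$) are element-wise. $\|z\|_{2,w}=\sqrt{\sum_iw_iz_i^2}$; $I(v)\in(\mathbb{R}^N)^R$ has all blocks equal to $v$; $\|y\|_{2,\theta}=\sqrt{\sum_r\|y_r\|^2_{2,\theta_r}}$. *)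

(* the statement is purely order-algebraic (finite sums,
   linear/quadratic forms, minima), so it is stated over an arbitrary
   real closed field T (the reals being one instance). *)
From HB Require Import structures.
From mathcomp Require Import all_boot all_order all_algebra.
From Stdlib Require Import ClassicalEpsilon.
Set Implicit Arguments. Unset Strict Implicit. Unset Printing Implicit Defensive.
Import Order.TTheory GRing.Theory Num.Theory.
Local Open Scope ring_scope.

Definition submodular (T : realDomainType) (N : nat) (F : {set 'I_N} -> T) : Prop :=
  forall A B : {set 'I_N}, F (A :|: B) + F (A :&: B) <= F A + F B.

Definition in_base (T : realDomainType) (N : nat) (F : {set 'I_N} -> T)
  (u : 'I_N -> T) : Prop :=
  (forall S : {set 'I_N}, \sum_(i in S) u i <= F S) /\ \sum_i u i = F setT.

Definition is_max_of (T : realDomainType) (P : T -> Prop) (v : T) : Prop :=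
  P v /\ forall z, P z -> z <= v.

Definition lovasz (T : realDomainType) (N : nat) (F : {set 'I_N} -> T)
  (x : 'I_N -> T) : T :=
  epsilon (inhabits 0)
    (is_max_of (fun z => exists u, in_base F u /\ z = \sum_i u i * x i)).

Definition minimizer_on (X : Type) (T : realDomainType) (S : X -> Prop)
  (f : X -> T) (x : X) : Prop :=
  S x /\ forall z, S z -> f x <= f z.

Definition support_set (T : realDomainType) (N : nat) (F : {set 'I_N} -> T)
  : {set 'I_N} :=
  [set i | [exists S : {set 'I_N}, (i \notin S) && (F (i |: S) != F S)]].

Definition mu (T : realDomainType) (N R : nat) (F : 'I_R -> {set 'I_N} -> T)
  (i : 'I_N) : nat :=
  #|[set r : 'I_R | i \in support_set (F r)]|.

Definition in_B (T : realDomainType) (N R : nat) (F : 'I_R -> {set 'I_N} -> T)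
  (y : 'I_R -> 'I_N -> T) : Prop :=
  forall r, in_base (F r) (y r).

Definition Aop (T : realDomainType) (N R : nat) (y : 'I_R -> 'I_N -> T)
  : 'I_N -> T :=
  fun i => \sum_(r < R) y r i.

Definition in_A (T : realDomainType) (N R : nat) (F : 'I_R -> {set 'I_N} -> T)
  (a : 'I_R -> 'I_N -> T) : Prop :=
  (forall i, Aop a i = 0) /\
  (forall r i, i \notin support_set (F r) -> a r i = 0).

Definition wnorm2 (T : realDomainType) (N : nat) (w z : 'I_N -> T) : T :=
  \sum_i w i * z i ^+ 2.

Definition wnorm2_prod (T : realDomainType) (N R : nat)
  (th y : 'I_R -> 'I_N -> T) : T :=
  \sum_(r < R) wnorm2 (th r) (y r).

Definition Ivec (T : Type) (N R : nat) (v : 'I_N -> T) : 'I_R -> 'I_N -> T :=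
  fun _ => v.

From HB Require Import structures.
From mathcomp Require Import all_boot all_order all_algebra.
From Stdlib Require Import ClassicalEpsilon FunctionalExtensionality.
From mathcomp Require Import ring lra zify.
Set Implicit Arguments. Unset Strict Implicit. Unset Printing Implicit Defensive.
Import Order.TTheory GRing.Theory Num.Theory.
Local Open Scope ring_scope.

(* Completing the square gives, for y in B and any x,
     sum_r f_r(x) + 1/2 |x|_w^2 >= <Ay, x> + 1/2 |x|_w^2
                              = -1/2 |Ay|_{w^-1}^2 + 1/2 |w x + Ay|_{w^-1}^2,
   which is weak duality.  A dual minimizer y exists because a convex quadratic
   attains its minimum on a polyhedron (proved here over any real closed field, by
   induction on the number of constraints).  Optimality of y against moves inside a
   single block B_r shows that y_r maximizes <., x> over B_r for x = -w^-1 Ay, so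
   f_r(x) = <y_r, x> (the Lovasz extension being computed by Edmonds' greedy
   algorithm); hence the gap closes, and the vanishing square forces every primal
   minimizer to equal x.  For a in A the blocks of a - y vanish outside the mu_i
   blocks whose support contains i and sum to -Ay, so Cauchy-Schwarz bounds
   |a - y|^2 below by |Ay|_{w^-1}^2, with equality when Ay is spread evenly over
   those blocks. *)

Section Gram.
Variable T : rcfType.

Lemma mulmx_tr_eq0 m n (Y : 'M[T]_(m, n)) : Y *m Y^T = 0 -> Y = 0.
Proof.
move=> YY0; apply/matrixP => i j; rewrite mxE.
have := congr1 (fun M : 'M[T]_m => M i i) YY0; rewrite mxE [RHS]mxE => sq0.
have sq_ge0 k : true -> 0 <= Y i k * Y^T k i by rewrite mxE -expr2 sqr_ge0.
have := psumr_eq0P sq_ge0 sq0 (i:=j) isT.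
by rewrite mxE -expr2 => /eqP; rewrite sqrf_eq0 => /eqP.
Qed.

Lemma mxrank_mul_tr m n (K : 'M[T]_(m, n)) : \rank (K *m K^T) = \rank K.
Proof.
apply/eqP; rewrite eqn_leq mxrankM_maxl /=.
have ker_sub : (kermx (K *m K^T) <= kermx K)%MS.
  apply/sub_kermxP/mulmx_tr_eq0.
  by rewrite trmx_mul mulmxA -(mulmxA _ K) mulmx_ker mul0mx.
have := mxrankS ker_sub; rewrite !mxrank_ker.
have := rank_leq_row K; lia.
Qed.
End Gram.

Section PolyhedralMinimum.
Variables (T : rcfType) (d : nat).
Implicit Types (psi g h : 'rV[T]_d -> T) (x y z : 'rV[T]_d).

Definition attains_min (U : Type) (f : U -> T) := exists u, forall v, f u <= f v.

Definition quasiconvex psi :=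
  forall x y t, 0 <= t <= 1 -> psi (x + t *: (y - x)) <= Num.max (psi x) (psi y).

Definition min_on_flats psi :=
  forall p (M : 'M[T]_d), attains_min (fun x => psi (p + x *m M)).

Definition affine g := exists (a : 'cV[T]_d) (b : T), forall x, g x = (x *m a) 0 0 + b.

Lemma affine_segment g x y t :
  affine g -> g (x + t *: (y - x)) = g x + t * (g y - g x).
Proof.
case=> a [b ga]; rewrite !ga mulmxDl -scalemxAl mulmxBl.
by move: (x *m a) (y *m a) => X Y; rewrite !mxE; ring.
Qed.

Lemma affine_comp g p (M : 'M_d) : affine g -> affine (fun x => g (p + x *m M)).
Proof.
case=> a [b ga]; exists (M *m a), ((p *m a) 0 0 + b) => x.
rewrite ga mulmxDl -mulmxA.
by move: (p *m a) (x *m (M *m a)) => P X; rewrite !mxE; ring.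
Qed.

Lemma quasiconvex_comp psi p (M : 'M_d) :
  quasiconvex psi -> quasiconvex (fun x => psi (p + x *m M)).
Proof.
move=> qc x y t t01.
have -> : p + (x + t *: (y - x)) *m M = (p + x *m M) + t *: ((p + y *m M) - (p + x *m M)).
  by rewrite mulmxDl -scalemxAl mulmxBl addrA opprD addrACA subrr add0r.
exact: qc.
Qed.

Lemma min_on_flats_comp psi p (M : 'M_d) :
  min_on_flats psi -> min_on_flats (fun x => psi (p + x *m M)).
Proof.
move=> hm q M'; have [x hx] := hm (p + q *m M) (M' *m M).
exists x => y; have E z : p + (q + z *m M') *m M = p + q *m M + z *m (M' *m M).
  by rewrite mulmxDl addrA mulmxA.
by rewrite !E.
Qed.

Lemma hyperplane_param g p0 : affine g -> g p0 = 0 ->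
  exists Pi : 'M[T]_d, (forall x, g (p0 + x *m Pi) = 0) /\
                       (forall y, g y = 0 -> p0 + (y - p0) *m Pi = y).
Proof.
case=> a [b ga] gp0.
have [a0|a_neq0] := eqVneq a 0.
  have gb z : g z = b by rewrite ga a0 mulmx0 mxE add0r.
  by exists 1%:M; split=> [x|y _]; rewrite ?gb -?(gb p0) // mulmx1 addrC subrK.
pose s := (a^T *m a) 0 0.
have s_neq0 : s != 0.
  apply: contra_neq a_neq0 => s0; apply: trmx_inj; rewrite trmx0.
  by apply: mulmx_tr_eq0; rewrite trmxK [_ *m _]mx11_scalar -/s s0 raddf0.
pose Pi := 1%:M - s^-1 *: (a *m a^T).
have PiE x : x *m Pi = x - s^-1 *: (x *m a *m a^T).
  by rewrite mulmxBr mulmx1 -scalemxAr mulmxA.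
have Pi_a x : x *m Pi *m a = 0.
  rewrite PiE mulmxBl -scalemxAl -!mulmxA [a^T *m a]mx11_scalar -/s mul_mx_scalar.
  by rewrite -scalemxAr scalerA mulVf // scale1r subrr.
have ker_a y : g y = 0 -> (y - p0) *m a = 0.
  move=> gy; have gE z : z *m a = (g z - b)%:M by rewrite ga addrK -mx11_scalar.
  by rewrite mulmxBl !gE gy gp0 subrr.
exists Pi; split=> [x|y gy]; first by rewrite ga mulmxDl Pi_a addr0 -ga.
by rewrite PiE ker_a // mul0mx scaler0 subr0 addrC subrK.
Qed.

Lemma segment_hyperplane g psi x y :
  affine g -> quasiconvex psi -> 0 < g x -> g y <= 0 ->
  exists z, [/\ g z = 0, psi z <= Num.max (psi x) (psi y) &
                forall h, affine h -> h x <= 0 -> h y <= 0 -> h z <= 0].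
Proof.
move=> ag qc gx gy; pose t := g x / (g x - g y).
have gxy : 0 < g x - g y by rewrite subr_gt0 (le_lt_trans gy gx).
have t01 : 0 <= t <= 1.
  by rewrite /t divr_ge0 ?(ltW gx) ?(ltW gxy) //= ler_pdivrMr // mul1r lerDl oppr_ge0.
exists (x + t *: (y - x)); split; last 1 first.
- move=> h ah hx hy; rewrite affine_segment //; case/andP: t01.
  by move: (h x) (h y) t hx hy => X Y u; nra.
- rewrite affine_segment // /t; move: (g x) (g y) gxy => X Y XY.
  by field; rewrite gt_eqF.
- exact: qc.
Qed.

Lemma forall_ord_liftP m (P : 'I_m.+1 -> Prop) :
  (forall k, P k) <-> P ord0 /\ (forall k, P (lift ord0 k)).
Proof.
split=> [hP | [h0 hl] k]; first by split.
by case: (unliftP ord0 k) => [j ->|->].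
Qed.

Lemma polyhedral_min_ord m (g : 'I_m -> 'rV[T]_d -> T) psi :
  (forall k, affine (g k)) -> quasiconvex psi -> min_on_flats psi ->
  (exists x, forall k, g k x <= 0) ->
  exists x, (forall k, g k x <= 0) /\
            forall y, (forall k, g k y <= 0) -> psi x <= psi y.
Proof.
elim: m g psi => [|m IH] g psi ag qc mf [z0 gz0].
  have [x hx] := mf 0 1%:M; exists x; split=> [[]//|y _].
  by have := hx y; rewrite !add0r !mulmx1.
have feasE y : (forall k, g k y <= 0) <->
               g ord0 y <= 0 /\ forall k, g (lift ord0 k) y <= 0.
  exact: forall_ord_liftP (fun k => g k y <= 0).
have /feasE [_ gz0r] := gz0.
have [x' [x'r x'min]] := IH _ psi (fun k => ag _) qc mf (ex_intro _ z0 gz0r).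
have [x'l|x'l] := lerP (g ord0 x') 0.
  by exists x'; split=> [|y /feasE[_ gyr]]; [apply/feasE | exact: x'min].
(* x' violates the constraint g ord0, so pulling any feasible y back along [x', y]
   to the hyperplane g ord0 = 0 does not increase psi: it suffices to minimize over
   that hyperplane, an affine image of 'rV_d with one constraint fewer. *)
have cross y : (forall k, g k y <= 0) -> exists z,
    [/\ g ord0 z = 0, forall k, g (lift ord0 k) z <= 0 & psi z <= psi y].
  move=> /feasE [gyl gyr].
  have [z [glz qz hz]] := segment_hyperplane (ag ord0) qc x'l gyl.
  exists z; split=> // [k|]; first exact: hz _ (ag _) (x'r k) (gyr k).
  by apply: le_trans qz _; rewrite ge_max lexx x'min.
have [p0 [gp0 gp0r _]] := cross z0 gz0.
have [Pi [onH paramH]] := hyperplane_param (ag ord0) gp0.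
have feas0 : forall k, g (lift ord0 k) (p0 + 0 *m Pi) <= 0.
  by move=> k; rewrite mul0mx addr0 gp0r.
have [gam [gamr gammin]] := IH (fun k x => g (lift ord0 k) (p0 + x *m Pi))
  (fun x => psi (p0 + x *m Pi)) (fun k => affine_comp _ _ (ag _))
  (quasiconvex_comp _ _ qc) (min_on_flats_comp _ _ mf) (ex_intro _ 0 feas0).
exists (p0 + gam *m Pi); split; first by apply/feasE; split; [rewrite onH | exact: gamr].
move=> y /cross [z [glz gzr qz]]; apply: le_trans qz.
by have := gammin (z - p0); rewrite paramH //; apply.
Qed.

Theorem polyhedral_min (I : finType) (g : I -> 'rV[T]_d -> T) psi :
  (forall k, affine (g k)) -> quasiconvex psi -> min_on_flats psi ->
  (exists x, forall k, g k x <= 0) ->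
  exists x, (forall k, g k x <= 0) /\
            forall y, (forall k, g k y <= 0) -> psi x <= psi y.
Proof.
move=> ag qc mf [z0 gz0].
have feasE y : (forall k, g k y <= 0) <-> forall j : 'I_#|I|, g (enum_val j) y <= 0.
  by split=> gy k; last rewrite -(enum_rankK k); apply: gy.
have [x [gx xmin]] := @polyhedral_min_ord #|I| (fun j => g (enum_val j)) psi
  (fun j => ag _) qc mf (ex_intro _ z0 (fun j => gz0 _)).
by exists x; split=> [|y /feasE]; [apply/feasE | exact: xmin].
Qed.
End PolyhedralMinimum.

Section LeastSquares.
Variable T : rcfType.

Definition sqnorm n (v : 'rV[T]_n) := (v *m v^T) 0 0.

Lemma sqnormE n (v : 'rV[T]_n) : sqnorm v = \sum_j v 0 j ^+ 2.
Proof. by rewrite /sqnorm mxE; apply: eq_bigr => j _; rewrite mxE expr2. Qed.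

Lemma sqnorm_ge0 n (v : 'rV[T]_n) : 0 <= sqnorm v.
Proof. by rewrite sqnormE sumr_ge0 // => j _; apply: sqr_ge0. Qed.

Lemma sqnormDZ n (u v : 'rV[T]_n) t :
  sqnorm (u + t *: v) = sqnorm u + 2 * t * (u *m v^T) 0 0 + t ^+ 2 * sqnorm v.
Proof.
rewrite !sqnormE [(u *m v^T) 0 0]mxE !mulr_sumr -!big_split /=.
by apply: eq_bigr => j _; rewrite !mxE; ring.
Qed.

Lemma least_squares d n (u : 'rV[T]_n) (K : 'M[T]_(d, n)) :
  attains_min (fun g : 'rV[T]_d => sqnorm (u + g *m K)).
Proof.
(* The normal equations D *m (K *m K^T) = u *m K^T are solvable because K *m K^T
   and K^T have the same rank, hence the same row space. *)
have sub_KKt : (K^T <= K *m K^T)%MS.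
  by rewrite -(mxrank_leqif_sup (submxMl K K^T)).2 mxrank_tr mxrank_mul_tr.
have [D uKt] := submxP (submx_trans (submxMl u K^T) sub_KKt).
exists (- D) => g; pose e := u - D *m K.
have e_orth : e *m K^T = 0 by rewrite mulmxBl uKt mulmxA subrr.
have -> : u + g *m K = e + 1 *: ((g + D) *m K).
  by rewrite scale1r /e mulmxDl addrACA addNr addr0.
rewrite mulNmx sqnormDZ trmx_mul mulmxA e_orth mul0mx mxE mulr0 addr0.
by rewrite lerDl mulr_ge0 ?sqr_ge0 ?sqnorm_ge0.
Qed.

Lemma quasiconvex_sqnorm d n (u : 'rV[T]_n) (K : 'M[T]_(d, n)) :
  quasiconvex (fun g : 'rV[T]_d => sqnorm (u + g *m K)).
Proof.
move=> x y t /andP[t0 t1].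
have -> : u + (x + t *: (y - x)) *m K = (u + x *m K) + t *: ((y - x) *m K).
  by rewrite mulmxDl -scalemxAl addrA.
have -> : u + y *m K = (u + x *m K) + 1 *: ((y - x) *m K).
  by rewrite scale1r mulmxBl addrA addrAC addrK.
rewrite !sqnormDZ; have := sqnorm_ge0 ((y - x) *m K).
move: (sqnorm _) (_ 0 0) (sqnorm _) => A C B B0.
have convex :
    A + 2 * t * C + t ^+ 2 * B <= (1 - t) * A + t * (A + 2 * 1 * C + 1 ^+ 2 * B).
  have : 0 <= t * (1 - t) * B by rewrite !mulr_ge0 ?subr_ge0.
  nra.
apply: le_trans convex _; set M := Num.max _ _.
have [AM BM] : A <= M /\ A + 2 * 1 * C + 1 ^+ 2 * B <= M by rewrite !le_max !lexx ?orbT.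
nra.
Qed.

Lemma min_on_flats_sqnorm d n (u : 'rV[T]_n) (K : 'M[T]_(d, n)) :
  min_on_flats (fun g : 'rV[T]_d => sqnorm (u + g *m K)).
Proof.
move=> p M; have [g gmin] := least_squares (u + p *m K) (M *m K).
exists g => g'; have E h : u + (p + h *m M) *m K = u + p *m K + h *m (M *m K).
  by rewrite mulmxDl addrA mulmxA.
by rewrite !E.
Qed.
End LeastSquares.

Section LinearMaps.
Variables (T : rcfType) (d : nat).

Lemma linear_mulmx_rep n (f : 'rV[T]_d -> 'rV[T]_n) :
  (forall u v, f (u + v) = f u + f v) -> (forall c u, f (c *: u) = c *: f u) ->
  exists K : 'M[T]_(d, n), forall u, f u = u *m K.
Proof.
move=> fD fZ; exists (\matrix_(j, i) f (delta_mx 0 j) 0 i) => u.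
have f0 : f 0 = 0 by rewrite -(scale0r 0) fZ scale0r.
rewrite {1}[u]row_sum_delta.
have -> : f (\sum_j u 0 j *: delta_mx 0 j) = \sum_j u 0 j *: f (delta_mx 0 j).
  by apply: (big_ind2 (fun a b => f a = b)) => // x1 x2 y1 y2 <- <-.
by apply/rowP => i; rewrite summxE !mxE; apply: eq_bigr => j _; rewrite !mxE.
Qed.

Lemma linear_affine (L : 'rV[T]_d -> T) c :
  (forall u v, L (u + v) = L u + L v) -> (forall c u, L (c *: u) = c * L u) ->
  affine (fun u => L u + c).
Proof.
move=> LD LZ; have [a La] := @linear_mulmx_rep 1 (fun u => \row_(j < 1) L u)
  (fun u v => ltac:(by apply/rowP => j; rewrite !mxE LD))
  (fun c u => ltac:(by apply/rowP => j; rewrite !mxE LZ)).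
by exists a, c => u; rewrite -La mxE.
Qed.
End LinearMaps.

Section Greedy.
Variables (T : rcfType) (N : nat) (F : {set 'I_N} -> T).
Hypotheses (Fsub : submodular F) (F0 : F set0 = 0).

Lemma submodular_diminishing (A B : {set 'I_N}) e :
  A \subset B -> e \notin B -> F (e |: B) - F B <= F (e |: A) - F A.
Proof.
move=> AB eB; have := Fsub (e |: A) B.
have -> : (e |: A) :|: B = e |: B by rewrite -setUA (setUidPr AB).
have -> : (e |: A) :&: B = A.
  apply/setP => j; rewrite !inE; case: (eqVneq j e) => [->|_] /=.
    by rewrite (negbTE eB); apply/esym/negP => /(subsetP AB); apply/negP.
  by apply/andb_idr/subsetP.
lra.
Qed.

Lemma sum_setT (f : 'I_N -> T) : \sum_(j in [set: 'I_N]) f j = \sum_j f j.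
Proof. by apply: eq_bigl => j; rewrite inE. Qed.

Variable x : 'I_N -> T.

Definition greedy_order := sort (fun i j => x j <= x i) (enum 'I_N).
Definition greedy_prefix k := [set j | j \in take k greedy_order].
Definition greedy_vec i :=
  F (greedy_prefix (index i greedy_order).+1) - F (greedy_prefix (index i greedy_order)).

Lemma greedy_order_uniq : uniq greedy_order.
Proof. by rewrite sort_uniq enum_uniq. Qed.

Lemma size_greedy_order : size greedy_order = N.
Proof. by rewrite size_sort size_enum_ord. Qed.

Lemma greedy_order_sorted : sorted (fun i j => x j <= x i) greedy_order.
Proof. by apply: sort_sorted => i j; rewrite le_total. Qed.

Lemma greedy_prefix0 : greedy_prefix 0 = set0.
Proof. by apply/setP => j; rewrite !inE take0. Qed.

Lemma greedy_prefixN : greedy_prefix N = setT.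
Proof.
by apply/setP => j; rewrite !inE take_oversize ?size_greedy_order // mem_sort mem_enum.
Qed.

Lemma greedy_prefixS i0 k : (k < N)%N ->
  greedy_prefix k.+1 = nth i0 greedy_order k |: greedy_prefix k.
Proof.
move=> kN; apply/setP => j.
by rewrite !inE (take_nth i0) ?size_greedy_order // mem_rcons inE.
Qed.

Lemma nth_greedy_notin_prefix i0 k : (k < N)%N ->
  nth i0 greedy_order k \notin greedy_prefix k.
Proof.
move=> kN; rewrite inE; have uo := greedy_order_uniq.
rewrite -(cat_take_drop k.+1 greedy_order) cat_uniq in uo.
rewrite (take_nth i0) ?size_greedy_order // in uo.
by rewrite rcons_uniq in uo; case/andP: uo => /andP[].
Qed.

Lemma greedy_vec_nth i0 k : (k < N)%N ->
  greedy_vec (nth i0 greedy_order k) = F (greedy_prefix k.+1) - F (greedy_prefix k).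
Proof.
by move=> kN; rewrite /greedy_vec index_uniq ?size_greedy_order ?greedy_order_uniq.
Qed.

Lemma sum_greedy_prefix k : (k <= N)%N ->
  \sum_(j in greedy_prefix k) greedy_vec j = F (greedy_prefix k).
Proof.
elim: k => [_|k IH kN]; first by rewrite greedy_prefix0 big_set0 F0.
rewrite (greedy_prefixS (Ordinal kN) kN) big_setU1 ?nth_greedy_notin_prefix //=.
by rewrite greedy_vec_nth // IH ?(ltnW kN) // -greedy_prefixS // subrK.
Qed.

Lemma greedy_in_base : in_base F greedy_vec.
Proof.
split; last by rewrite -sum_setT -greedy_prefixN sum_greedy_prefix.
move=> S.
suff step k : (k <= N)%N ->
    \sum_(j in S :&: greedy_prefix k) greedy_vec j <= F (S :&: greedy_prefix k).
  by have := step N (leqnn N); rewrite greedy_prefixN setIT.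
elim: k => [_|k IH kN]; first by rewrite greedy_prefix0 setI0 big_set0 F0.
pose e := nth (Ordinal kN) greedy_order k.
have eP : e \notin greedy_prefix k := nth_greedy_notin_prefix _ kN.
rewrite (greedy_prefixS (Ordinal kN) kN) -/e.
have [eS|eS] := boolP (e \in S); last first.
  have -> : S :&: (e |: greedy_prefix k) = S :&: greedy_prefix k.
    by apply/setP => j; rewrite !inE; case: eqP => // ->; rewrite (negbTE eS).
  exact: IH (ltnW kN).
have -> : S :&: (e |: greedy_prefix k) = e |: (S :&: greedy_prefix k).
  by apply/setP => j; rewrite !inE; case: eqP => [->|_] /=; rewrite ?eS.
rewrite big_setU1 /=; last by rewrite inE negb_and eP orbT.
rewrite greedy_vec_nth // (greedy_prefixS (Ordinal kN) kN) -/e.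
have := submodular_diminishing (subsetIr S (greedy_prefix k)) eP.
have := IH (ltnW kN); lra.
Qed.

Lemma greedy_max v : in_base F v -> \sum_i v i * x i <= \sum_i greedy_vec i * x i.
Proof.
move=> [vS vT].
have [N0|Npos] := posnP N.
  by rewrite !big1 // => i; have := ltn_ord i; rewrite [in X in (_ < X)%N -> _]N0.
pose i0 := Ordinal Npos; pose e k := nth i0 greedy_order k.
pose dv j := v j - greedy_vec j.
pose E k := \sum_(j in greedy_prefix k) dv j.
have E_le0 k : (k <= N)%N -> E k <= 0.
  by move=> kN; rewrite /E /dv sumrB sum_greedy_prefix // subr_le0 vS.
have sumS (f : 'I_N -> T) k : (k < N)%N ->
    \sum_(j in greedy_prefix k.+1) f j = f (e k) + \sum_(j in greedy_prefix k) f j.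
  by move=> kN; rewrite (greedy_prefixS i0 kN) big_setU1 ?nth_greedy_notin_prefix.
(* Abel summation along the greedy order: E is nonpositive and x decreases. *)
have abel k : (k < N)%N ->
    \sum_(j in greedy_prefix k.+1) dv j * x j <= E k.+1 * x (e k).
  elim: k => [N1|k IH kN].
    by rewrite /E !sumS // greedy_prefix0 !big_set0 !addr0.
  rewrite /E !(sumS _ k.+1) // -/(E k.+1).
  have xk : x (e k.+1) <= x (e k).
    by have /sortedP := greedy_order_sorted; apply; rewrite size_greedy_order.
  have := IH (ltnW kN); have := E_le0 k.+1 (ltnW kN).
  move: (\sum_(j in _) _) (E k.+1) (dv (e k.+1)) xk => D Ek z xk; nra.
have EN : E N = 0.
  by rewrite /E /dv sumrB sum_greedy_prefix // greedy_prefixN sum_setT vT subrr.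
have := abel N.-1; rewrite prednK // EN mul0r greedy_prefixN sum_setT => /(_ (leqnn N)).
by rewrite /dv (eq_bigr _ (fun i _ => mulrBl _ _ _)) sumrB subr_le0.
Qed.
End Greedy.

Section Lovasz.
Variables (T : rcfType) (N : nat) (F : {set 'I_N} -> T).
Hypotheses (Fsub : submodular F) (F0 : F set0 = 0).

Lemma lovasz_max x :
  is_max_of (fun z => exists u, in_base F u /\ z = \sum_i u i * x i) (lovasz F x).
Proof.
apply: epsilon_spec; exists (\sum_i greedy_vec F x i * x i); split.
  by exists (greedy_vec F x); split => //; apply: greedy_in_base.
by move=> z [u [uB ->]]; apply: greedy_max.
Qed.

Lemma lovasz_ge x u : in_base F u -> \sum_i u i * x i <= lovasz F x.
Proof. by move=> uB; apply: (lovasz_max x).2; exists u. Qed.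

Lemma lovasz_eq x u : in_base F u ->
  (forall v, in_base F v -> \sum_i v i * x i <= \sum_i u i * x i) ->
  lovasz F x = \sum_i u i * x i.
Proof.
move=> uB umax; have [[u' [u'B lov]] _] := lovasz_max x.
by apply/eqP; rewrite eq_le lovasz_ge // andbT lov umax.
Qed.

Lemma in_base_support u i : in_base F u -> i \notin support_set F -> u i = 0.
Proof.
move=> [uS uT] iS.
have Fi (S : {set 'I_N}) : i \notin S -> F (i |: S) = F S.
  move=> iS'; apply/eqP; apply: contraNT iS => Fne.
  by rewrite inE; apply/existsP; exists S; rewrite iS' Fne.
apply/eqP; rewrite eq_le; apply/andP; split.
  by have := uS [set i]; rewrite big_set1 -(setU0 [set i]) Fi ?inE // F0.
have := uS (setT :\ i); rewrite -(Fi (setT :\ i)) ?setD11 // setD1K ?inE // -uT.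
have -> : \sum_j u j = u i + \sum_(j in setT :\ i) u j.
  by rewrite (bigD1 i) //=; congr (_ + _); apply: eq_bigl => j; rewrite !inE andbT.
lra.
Qed.
End Lovasz.

Lemma linear_coef_ge0 (T : rcfType) (G H : T) : 0 <= H ->
  (forall t, 0 < t <= 1 -> 0 <= 2 * t * G + t ^+ 2 * H) -> 0 <= G.
Proof.
move=> H0 key; rewrite leNgt; apply/negP => G0.
have [HG|GH] := lerP H (- G).
  by have := key 1; rewrite ltr01 lexx expr1n => /(_ isT); lra.
have Hp : 0 < H by lra.
pose t := - G / H.
have t0 : 0 < t by rewrite divr_gt0 // oppr_gt0.
have t1 : t <= 1 by rewrite ler_pdivrMr // mul1r ltW.
have := key t; rewrite t0 t1 => /(_ isT).
have -> : 2 * t * G + t ^+ 2 * H = t * G by rewrite /t; field; rewrite gt_eqF.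
by rewrite pmulr_rge0 // leNgt G0.
Qed.

Lemma in_base_segment (T : rcfType) N (F : {set 'I_N} -> T) u v t :
  in_base F u -> in_base F v -> 0 <= t <= 1 ->
  in_base F (fun i => u i + t * (v i - u i)).
Proof.
move=> [uS uT] [vS vT] /andP[t0 t1].
have E (P : pred 'I_N) : \sum_(i | P i) (u i + t * (v i - u i)) =
    (1 - t) * \sum_(i | P i) u i + t * \sum_(i | P i) v i.
  by rewrite big_split /= -mulr_sumr sumrB; ring.
split=> [S|]; last by rewrite E uT vT; ring.
rewrite E; have := uS S; have := vS S.
move: (\sum_(i in S) u i) (\sum_(i in S) v i) => a b ua vb; nra.
Qed.

Section Duality.
Variables (T : rcfType) (N R : nat) (F : 'I_R -> {set 'I_N} -> T) (w : 'I_N -> T).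
Hypotheses (Fsub : forall r, submodular (F r)) (F0 : forall r, F r set0 = 0).
Hypothesis wpos : forall i, 0 < w i.
Implicit Types (y : 'I_R -> 'I_N -> T) (x : 'I_N -> T).

Definition primal x := \sum_(r < R) lovasz (F r) x + 2^-1 * wnorm2 w x.
Definition dual y := wnorm2 (fun i => (w i)^-1) (Aop y).
Definition primal_of_dual y i := - ((w i)^-1 * Aop y i).
Definition dual_residual y x := \sum_i (w i)^-1 * (w i * x i + Aop y i) ^+ 2.

Lemma winv_gt0 i : 0 < (w i)^-1.
Proof. by rewrite invr_gt0. Qed.

Lemma dual_residual_ge0 y x : 0 <= dual_residual y x.
Proof. by apply: sumr_ge0 => i _; rewrite mulr_ge0 ?sqr_ge0 ?ltW ?winv_gt0. Qed.

Lemma sum_Aop_mul y x : \sum_(r < R) \sum_i y r i * x i = \sum_i Aop y i * x i.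
Proof. by rewrite exchange_big; apply: eq_bigr => i _; rewrite /Aop mulr_suml. Qed.

Lemma lagrangian_completed_square y x :
  \sum_i Aop y i * x i + 2^-1 * wnorm2 w x =
  - (2^-1 * dual y) + 2^-1 * dual_residual y x.
Proof.
rewrite /dual /dual_residual /wnorm2 !mulr_sumr -sumrN -!big_split /=.
apply: eq_bigr => i _; have := wpos i.
by move: (w i) (x i) (Aop y i) => a b c a0; field; rewrite gt_eqF.
Qed.

Lemma weak_duality_gap y x : in_B F y ->
  - (2^-1 * dual y) + 2^-1 * dual_residual y x <= primal x.
Proof.
move=> yB; rewrite -lagrangian_completed_square /primal lerD2r -sum_Aop_mul.
by apply: ler_sum => r _; apply: lovasz_ge.
Qed.

Lemma weak_duality y x : in_B F y -> - (2^-1 * dual y) <= primal x.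
Proof.
move=> yB; apply: le_trans (weak_duality_gap x yB).
by rewrite lerDl mulr_ge0 ?invr_ge0 ?dual_residual_ge0.
Qed.

Definition replace_block y r (u : 'I_N -> T) : 'I_R -> 'I_N -> T :=
  fun r' => if r' == r then u else y r'.

Lemma in_B_replace_block y r u :
  in_B F y -> in_base (F r) u -> in_B F (replace_block y r u).
Proof. by move=> yB uB r'; rewrite /replace_block; case: eqP => [->|]. Qed.

Lemma Aop_replace_block y r u i :
  Aop (replace_block y r u) i = Aop y i + (u i - y r i).
Proof.
rewrite /Aop (bigD1 r) //= [in RHS](bigD1 r) //= /replace_block eqxx.
by rewrite (eq_bigr (fun r' => y r' i)) => [|r' /negbTE->] //; ring.
Qed.

Lemma dual_min_block_max y : minimizer_on (in_B F) dual y ->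
  forall r v, in_base (F r) v ->
  \sum_i v i * primal_of_dual y i <= \sum_i y r i * primal_of_dual y i.
Proof.
move=> [yB ymin] r v vB; pose dv i := v i - y r i.
pose G := \sum_i (w i)^-1 * Aop y i * dv i.
pose H := \sum_i (w i)^-1 * dv i ^+ 2.
have H0 : 0 <= H by apply: sumr_ge0 => i _; rewrite mulr_ge0 ?sqr_ge0 ?ltW ?winv_gt0.
suff G0 : 0 <= G.
  rewrite -subr_ge0 -sumrB (_ : \sum_i _ = G) //.
  by apply: eq_bigr => i _; rewrite /primal_of_dual /dv; ring.
apply: linear_coef_ge0 H0 _ => t /andP[t0 t1].
pose yt := replace_block y r (fun i => y r i + t * dv i).
have ytB : in_B F yt.
  by apply: in_B_replace_block => //; apply: in_base_segment; rewrite ?(ltW t0) ?t1.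
have := ymin yt ytB.
have -> : dual yt = dual y + 2 * t * G + t ^+ 2 * H.
  rewrite /dual /wnorm2 /G /H !mulr_sumr -!big_split /=; apply: eq_bigr => i _.
  by rewrite Aop_replace_block; ring.
by rewrite -addrA lerDl.
Qed.

Lemma strong_duality y : minimizer_on (in_B F) dual y ->
  primal (primal_of_dual y) = - (2^-1 * dual y) /\
  minimizer_on (fun _ => True) primal (primal_of_dual y).
Proof.
move=> ymin; have yB := ymin.1.
have P_eq : primal (primal_of_dual y) = - (2^-1 * dual y).
  rewrite /primal (eq_bigr (fun r => \sum_i y r i * primal_of_dual y i)) => [|r _].
    rewrite sum_Aop_mul lagrangian_completed_square /dual_residual big1 ?mulr0 ?addr0 //.
    move=> i _; rewrite /primal_of_dual; have := wpos i; move: (w i) (Aop y i) => a c a0.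
    have -> : a * - (a^-1 * c) + c = 0 by field; rewrite gt_eqF.
    by rewrite expr0n mulr0.
  by apply: lovasz_eq => // v vB; apply: dual_min_block_max.
by split=> //; split=> // x _; rewrite P_eq; apply: weak_duality.
Qed.

Lemma primal_minimizer_unique y x : minimizer_on (in_B F) dual y ->
  minimizer_on (fun _ => True) primal x -> forall i, x i = primal_of_dual y i.
Proof.
move=> ymin [_ xmin]; have [P_eq _] := strong_duality ymin.
have res0 : dual_residual y x = 0.
  have := xmin (primal_of_dual y) I; rewrite P_eq; have := weak_duality_gap x ymin.1.
  by move=> h1 h2; apply/eqP; rewrite eq_le dual_residual_ge0 andbT; lra.
move=> i; have res_ge0 j : true -> 0 <= (w j)^-1 * (w j * x j + Aop y j) ^+ 2.
  by rewrite mulr_ge0 ?sqr_ge0 ?ltW ?winv_gt0.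
have /eqP := psumr_eq0P res_ge0 res0 (i:=i) isT.
rewrite mulf_eq0 invr_eq0 gt_eqF //= sqrf_eq0 /primal_of_dual => /eqP.
have := wpos i; move: (w i) (x i) (Aop y i) => a b c a0 abc.
have -> : b = (a * b + c) / a - c / a by field; rewrite gt_eqF.
by rewrite abc mul0r sub0r mulrC.
Qed.
End Duality.

Lemma sqr_sum_le_card_sum_sqr (T : rcfType) (I : finType) (S : {set I}) (z : I -> T) :
  (\sum_(r in S) z r) ^+ 2 <= #|S|%:R * \sum_(r in S) z r ^+ 2.
Proof.
set m : T := #|S|%:R; set Z := \sum_(r in S) z r; set Q := \sum_(r in S) z r ^+ 2.
have [S0|S_gt0] := posnP #|S|.
  by rewrite /Z /Q (cards0_eq S0) !big_set0 expr0n /= mulr0.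
have m_gt0 : 0 < m by rewrite ltr0n.
have var : \sum_(r in S) (m * z r - Z) ^+ 2 = m * (m * Q - Z ^+ 2).
  transitivity (\sum_(r in S) (m ^+ 2 * z r ^+ 2 + (- (2 * m * Z)) * z r + Z ^+ 2)).
    by apply: eq_bigr => r _; ring.
  by rewrite !big_split /= -!mulr_sumr sumr_const -/Q -/Z -mulr_natr -/m; ring.
have : 0 <= m * (m * Q - Z ^+ 2) by rewrite -var sumr_ge0 // => r _; apply: sqr_ge0.
by rewrite pmulr_rge0 // subr_ge0.
Qed.

Section NullSpace.
Variables (T : rcfType) (N R : nat) (F : 'I_R -> {set 'I_N} -> T) (w : 'I_N -> T).
Hypothesis F0 : forall r, F r set0 = 0.
Hypothesis wpos : forall i, 0 < w i.
Hypothesis mu_ge1 : forall i, (1 <= mu F i)%N.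
Implicit Types (y a : 'I_R -> 'I_N -> T).

Definition block_dist a y :=
  wnorm2_prod (@Ivec T N R (fun i => (w i)^-1 * (mu F i)%:R)) (fun r i => a r i - y r i).

Definition nearest_in_A y r i :=
  y r i - (if i \in support_set (F r) then Aop y i / (mu F i)%:R else 0).

Lemma sum_over_support (z : T) i :
  \sum_(r < R) (if i \in support_set (F r) then z else 0) = (mu F i)%:R * z.
Proof.
rewrite -big_mkcond /= (eq_bigl (mem [set r | i \in support_set (F r)])) => [|r].
  by rewrite sumr_const mulr_natl.
by rewrite !inE.
Qed.

Lemma mu_neq0 i : (mu F i)%:R != 0 :> T.
Proof. by rewrite pnatr_eq0 -lt0n mu_ge1. Qed.

Lemma block_distE a y :
  block_dist a y = \sum_i (w i)^-1 * (mu F i)%:R * \sum_(r < R) (a r i - y r i) ^+ 2.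
Proof.
rewrite /block_dist /wnorm2_prod /wnorm2 /Ivec exchange_big.
by apply: eq_bigr => i _; rewrite mulr_sumr.
Qed.

Lemma nearest_in_A_in_A y : in_B F y -> in_A F (nearest_in_A y).
Proof.
move=> yB; split=> [i|r i iS].
  by rewrite /Aop /nearest_in_A sumrB sum_over_support mulrC divfK ?mu_neq0 // subrr.
by rewrite /nearest_in_A (negbTE iS) subr0 (in_base_support (F0 r) (yB r) iS).
Qed.

Lemma block_dist_nearest y : block_dist (nearest_in_A y) y = dual w y.
Proof.
rewrite block_distE /dual /wnorm2; apply: eq_bigr => i _.
rewrite (eq_bigr (fun r =>
  if i \in support_set (F r) then (Aop y i / (mu F i)%:R) ^+ 2 else 0)).
  rewrite sum_over_support -mulrA; congr (_ * _); have := mu_neq0 i.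
  by move: (mu F i)%:R (Aop y i) => m c m0; field.
by move=> r _; rewrite /nearest_in_A; case: ifP => _; ring.
Qed.

Lemma dual_le_block_dist y a : in_B F y -> in_A F a -> dual w y <= block_dist a y.
Proof.
move=> yB [aA aS]; rewrite block_distE /dual /wnorm2; apply: ler_sum => i _.
pose S := [set r | i \in support_set (F r)].
have off_S r : r \notin S -> a r i - y r i = 0.
  by rewrite inE => iS; rewrite (aS r i iS) (in_base_support (F0 r) (yB r) iS) subrr.
have sum_S (f : 'I_R -> T) :
    (forall r, r \notin S -> f r = 0) -> \sum_r f r = \sum_(r in S) f r.
  by move=> f0; rewrite [LHS](bigID (mem S)) /= [X in _ + X]big1 ?addr0.
have := sqr_sum_le_card_sum_sqr S (fun r => a r i - y r i).
rewrite -!sum_S => [|r /off_S ->|//]; last by rewrite expr0n.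
have := aA i; rewrite /Aop sumrB => ->; rewrite sub0r sqrrN -mulrA => CS.
by apply: ler_wpM2l CS; rewrite invr_ge0 ltW.
Qed.
End NullSpace.

Section DualAttained.
Variables (T : rcfType) (N R : nat) (F : 'I_R -> {set 'I_N} -> T) (w : 'I_N -> T).
Hypotheses (Fsub : forall r, submodular (F r)) (F0 : forall r, F r set0 = 0).
Hypothesis wpos : forall i, 0 < w i.
Implicit Type al : 'rV[T]_(R * N).

Definition blocks_of al : 'I_R -> 'I_N -> T := fun r i => (vec_mx al : 'M_(R, N)) r i.

Lemma blocks_ofK y : blocks_of (mxvec (\matrix_(r, i) y r i)) = y.
Proof.
by apply: functional_extensionality => r; apply: functional_extensionality => i;
  rewrite /blocks_of mxvecK mxE.
Qed.

Lemma blocks_ofD al al' r i :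
  blocks_of (al + al') r i = blocks_of al r i + blocks_of al' r i.
Proof. by rewrite /blocks_of linearD mxE. Qed.

Lemma blocks_ofZ c al r i : blocks_of (c *: al) r i = c * blocks_of al r i.
Proof. by rewrite /blocks_of linearZ mxE. Qed.

Definition base_constraint (k : ('I_R * {set 'I_N}) + 'I_R) al : T :=
  match k with
  | inl (r, A) => \sum_(i in A) blocks_of al r i + - F r A
  | inr r => - \sum_i blocks_of al r i + F r setT
  end.

Lemma base_constraint_affine k : affine (base_constraint k).
Proof.
case: k => [[r S]|r]; apply: linear_affine => [u v|c u].
- by rewrite -big_split; apply: eq_bigr => i _; rewrite blocks_ofD.
- by rewrite mulr_sumr; apply: eq_bigr => i _; rewrite blocks_ofZ.
- by rewrite -opprD -big_split; congr (- _); apply: eq_bigr => i _; rewrite blocks_ofD.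
- by rewrite mulrN mulr_sumr; congr (- _); apply: eq_bigr => i _; rewrite blocks_ofZ.
Qed.

Lemma in_B_constraints al : in_B F (blocks_of al) <-> forall k, base_constraint k al <= 0.
Proof.
split=> [yB [[r S]|r] /=|hk r]; first by rewrite subr_le0; apply: (yB r).1.
  by rewrite (yB r).2 addNr.
split=> [S|]; first by have := hk (inl (r, S)); rewrite /= subr_le0.
apply/eqP; rewrite eq_le; have := hk (inl (r, setT)); have := hk (inr r).
by rewrite /= sum_setT addrC !subr_le0 => -> ->.
Qed.

Lemma dual_sqnorm : exists K : 'M[T]_(R * N, N),
  forall al, sqnorm (0 + al *m K) = dual w (blocks_of al).
Proof.
pose f al := \row_(i < N) (Num.sqrt (w i)^-1 * \sum_r blocks_of al r i).
have [K fK] : exists K : 'M[T]_(R * N, N), forall al, f al = al *m K.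
  apply: linear_mulmx_rep => [u v|c u]; apply/rowP => i; rewrite !mxE.
    rewrite -mulrDr -big_split; congr (_ * _).
    by apply: eq_bigr => r _; rewrite blocks_ofD.
  rewrite mulrCA; congr (_ * _); rewrite mulr_sumr.
  by apply: eq_bigr => r _; rewrite blocks_ofZ.
exists K => al; rewrite add0r -fK sqnormE /dual /wnorm2; apply: eq_bigr => i _.
by rewrite mxE exprMn sqr_sqrtr // invr_ge0 ltW.
Qed.

Theorem dual_attained : exists y, minimizer_on (in_B F) (dual w) y.
Proof.
have [K dualK] := dual_sqnorm.
have feasible : exists al, forall k, base_constraint k al <= 0.
  exists (mxvec (\matrix_(r, i) greedy_vec (F r) (fun _ => 0) i)).
  by apply/in_B_constraints => r; rewrite blocks_ofK; apply: greedy_in_base.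
have [al [alB almin]] := polyhedral_min base_constraint_affine
  (quasiconvex_sqnorm 0 K) (min_on_flats_sqnorm 0 K) feasible.
exists (blocks_of al); split=> [|y yB]; first exact/in_B_constraints.
rewrite -dualK -(blocks_ofK y) -dualK; apply: almin.
by apply/in_B_constraints; rewrite blocks_ofK.
Qed.
End DualAttained.

Lemma partial_minimization (T : realDomainType) (X Y : Type)
    (PX : X -> Prop) (PY : Y -> Prop) (J : X * Y -> T) (D : Y -> T) (best : Y -> X) :
  (forall y, PY y -> PX (best y) /\ J (best y, y) = D y) ->
  (forall a y, PX a -> PY y -> D y <= J (a, y)) ->
  [/\ forall y, PY y -> minimizer_on PX (fun a => J (a, y)) (best y),
      forall a y, minimizer_on (fun p => PX p.1 /\ PY p.2) J (a, y) ->
        minimizer_on PY D y /\ J (a, y) = D y &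
      forall y, minimizer_on PY D y ->
        minimizer_on (fun p => PX p.1 /\ PY p.2) J (best y, y)].
Proof.
move=> bestP D_le_J; split.
- move=> y yY; have [bX bJ] := bestP y yY.
  by split=> // a aX; rewrite bJ D_le_J.
- move=> a y [[aX yY] amin].
  have J_le_D y' : PY y' -> J (a, y) <= D y'.
    by move=> y'Y; have [bX <-] := bestP y' y'Y; apply: amin.
  split; first by split=> // y' y'Y; exact: le_trans (D_le_J _ _ aX yY) (J_le_D _ y'Y).
  by apply/eqP; rewrite eq_le J_le_D // D_le_J.
- move=> y [yY ymin]; have [bX bJ] := bestP y yY.
  split=> // -[a' y'] [a'X y'Y] /=; rewrite bJ.
  exact: le_trans (ymin y' y'Y) (D_le_J _ _ a'X y'Y).
Qed.

Theorem mainTheorem14 (T : rcfType) (N R : nat)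
  (F : 'I_R -> {set 'I_N} -> T) (w : 'I_N -> T)
  (Fsub : forall r, submodular (F r))
  (F0 : forall r, F r set0 = 0)
  (wpos : forall i, 0 < w i)
  (mu_ge1 : forall i, (1 <= mu F i)%N) :
  let winv : 'I_N -> T := fun i => (w i)^-1 in
  let P : ('I_N -> T) -> T :=
    fun x => \sum_(r < R) lovasz (F r) x + 2^-1 * wnorm2 w x in
  let D : ('I_R -> 'I_N -> T) -> T := fun y => wnorm2 winv (Aop y) in
  let theta : 'I_R -> 'I_N -> T := @Ivec T N R (fun i => winv i * (mu F i)%:R) in
  let J : ('I_R -> 'I_N -> T) * ('I_R -> 'I_N -> T) -> T :=
    fun p => wnorm2_prod theta (fun r i => p.1 r i - p.2 r i) in
  (exists (x0 : 'I_N -> T) (y0 : 'I_R -> 'I_N -> T),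
      minimizer_on (fun _ => True) P x0 /\
      minimizer_on (in_B F) D y0 /\
      P x0 = - (2^-1 * D y0)) /\
  (forall y, minimizer_on (in_B F) D y ->
     forall x, minimizer_on (fun _ => True) P x <->
               (forall i, x i = - (winv i * Aop y i))) /\
  (forall y, in_B F y ->
     exists a0, minimizer_on (in_A F)
                  (fun a => wnorm2_prod theta (fun r i => a r i - y r i)) a0 /\
                wnorm2_prod theta (fun r i => a0 r i - y r i) = D y) /\
  (forall a y, minimizer_on (fun p => in_A F p.1 /\ in_B F p.2) J (a, y) ->
     minimizer_on (in_B F) D y /\ J (a, y) = D y) /\
  (forall y, minimizer_on (in_B F) D y ->
     exists a, minimizer_on (fun p => in_A F p.1 /\ in_B F p.2) J (a, y)).
Proof.
move=> winv P D theta J.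
have [nearest_min joint_dual dual_joint] :=
  @partial_minimization _ _ _ (in_A F) (in_B F) J D (nearest_in_A F)
  (fun y yB => conj (nearest_in_A_in_A F0 mu_ge1 yB) (block_dist_nearest w mu_ge1 y))
  (fun a y aA yB => dual_le_block_dist F0 wpos yB aA).
split.
  have [y0 y0min] := dual_attained Fsub F0 wpos.
  have [P_eq Pmin] := strong_duality Fsub F0 wpos y0min.
  by exists (primal_of_dual w y0), y0.
split.
  move=> y ymin x; split=> [xmin i|xE]; first exact: primal_minimizer_unique xmin i.
  have -> : x = primal_of_dual w y by apply: functional_extensionality.
  exact: (strong_duality Fsub F0 wpos ymin).2.
split.
  move=> y yB; exists (nearest_in_A F y).
  by split; [exact: nearest_min | exact: block_dist_nearest].
by split=> // y ymin; exists (nearest_in_A F y); exact: dual_joint.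
Qed.
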